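(* There exists a hypothesis class $\mathcal H$ with VC dimension $1$ such that every protocol that learns $\mathcal H$ properly with error parameter $\epsilon$ has sample complexity at least $\tilde\Omega(1/\epsilon)$. Moreover, this holds even if the input sample is realizable by $\mathcal H$.
   Context: Communication model: Let $\mathcal X$ be a domain and $\mathcal Z=\mathcal X\times\{\pm1\}$ the set of examples. A sample is a finite sequence of examples. Alice receives a sample $S_a$ and Bob a sample $S_b$; the joint sample $S=(S_a,S_b)$ is their concatenation, arbitrarily split. A deterministic protocol proceeds by messages, each either a single example from the sender's own input sample or a single bit, depending only on the sender's input and previous messages; output is determined by the messages. Each example or bit costs one unit; sample complexity is the maximal number of units transmitted. $L_S(h)=\frac{1}{|S|}\sum_{(x,y)\in S}1[h(x)\ne y]$; $S$ is realizable by $\mathcal H$ if $L_S(h)=0$ for some $h\in\mathcal H$. A protocol learns $\mathcal H$ with error $\epsilon$ if it always outputs $h$ with $L_S(h)\le\min_{f\in\mathcal H}L_S(f)+\epsilon$; it learns properly if its output always lies in $\mathcal H$. $\tilde\Omega$ denotes a lower bound up to logarithmic factors. *)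

From mathcomp Require Import ssreflect ssrfun ssrbool eqtype ssrnat seq.
From Stdlib Require Import Reals.

Set Implicit Arguments.
Unset Strict Implicit.
Unset Printing Implicit Defensive.

Section Learning.
Variable X : eqType.

(* An example is a point together with a label; +1 is encoded by true, -1 by false. *)
Definition example := (X * bool)%type.

Definition emp_loss (S : seq example) (h : X -> bool) : R :=
  (INR (count (fun z : example => h z.1 != z.2) S) / INR (size S))%R.

Definition hclass := (X -> bool) -> Prop.

Definition realizable (H : hclass) (S : seq example) : Prop :=
  exists h, H h /\ emp_loss S h = 0%R.

Definition shatters (H : hclass) (s : seq X) : Prop :=
  forall f : X -> bool, exists h, H h /\ forall x, x \in s -> h x = f x.

Definition VC_dim (H : hclass) (d : nat) : Prop :=
  (exists s, uniq s /\ size s = d /\ shatters H s) /\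
  (forall s, uniq s -> shatters H s -> size s <= d).

(* Messages: a single example or a single bit; each costs one unit. *)
Inductive msg := MEx of example | MBit of bool.

(* A deterministic two-party protocol.  [turn t] says, from the transcript t
   so far, whether the protocol halts (None), Alice speaks (Some true) or Bob
   speaks (Some false). *)
Record protocol := Protocol {
  turn : seq msg -> option bool;
  speak_a : seq example -> seq msg -> msg;
  speak_b : seq example -> seq msg -> msg;
  output : seq msg -> (X -> bool)
}.

Fixpoint run (P : protocol) (Sa Sb : seq example) (n : nat) : seq msg :=
  match n with
  | 0 => [::]
  | n'.+1 =>
      let t := run P Sa Sb n' in
      match turn P t with
      | None => t
      | Some true => rcons t (speak_a P Sa t)
      | Some false => rcons t (speak_b P Sb t)
      end
  end.

Definition legal_msg (S : seq example) (m : msg) : bool :=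
  match m with MEx z => z \in S | MBit _ => true end.

Definition runs_within (P : protocol) (T : nat) (Sa Sb : seq example) : Prop :=
  turn P (run P Sa Sb T) = None /\
  (forall k, k < T ->
     let t := run P Sa Sb k in
     match turn P t with
     | Some true => legal_msg Sa (speak_a P Sa t)
     | Some false => legal_msg Sb (speak_b P Sb t)
     | None => true
     end).

Definition proper_learner_realizable (H : hclass) (eps : R) (P : protocol)
  (T : nat) : Prop :=
  forall Sa Sb : seq example, realizable H (Sa ++ Sb) ->
    runs_within P T Sa Sb /\
    let h := output P (run P Sa Sb T) in
    H h /\ forall f, H f -> (emp_loss (Sa ++ Sb) h <= emp_loss (Sa ++ Sb) f + eps)%R.

End Learning.

(* The class consists of the indicators of the sets {(n, 0), (n, t)} with 0 < t <= n.
   At scale m, the negative points (2m, 1), ..., (2m, 2m) form m pairs; for b in {0,1}^m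
   Alice holds (2m, 0) labelled + and one point of each pair, Bob the other one.  For
   b1 != b2 the mixed input (Alice b1, Bob b2) is realizable, since some pair is left
   uncovered, but the mixed inputs (b1, b2) and (b2, b1) together cover every pair, so
   no hypothesis fits both: a proper learner with error below 1/(2m+1) must produce
   different transcripts on them.  By the rectangle property of protocols the coded
   transcripts on the inputs (b, b) are then pairwise distinct; messages range over an
   alphabet of size 2m + 4, hence 2^m <= (2m+4)^T.  Taking m about 1/(4 eps) gives
   T >= 1/(8 eps (1 + ln (1/eps))). *)

From HB Require Import structures.
From Stdlib Require Import Reals Lra Lia ZArith.
From mathcomp Require Import ssreflect ssrfun ssrbool eqtype ssrnat seq.
From mathcomp Require Import fintype finfun.
From mathcomp Require Import zify.

Set Implicit Arguments.
Unset Strict Implicit.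
Unset Printing Implicit Defensive.

Definition sum_of_msg (X : eqType) (x : msg X) : example X + bool :=
  match x with MEx z => inl z | MBit b => inr b end.

Definition msg_of_sum (X : eqType) (s : example X + bool) : msg X :=
  match s with inl z => MEx z | inr b => MBit X b end.

Lemma sum_of_msgK (X : eqType) : cancel (@sum_of_msg X) (@msg_of_sum X).
Proof. by case. Qed.

HB.instance Definition _ (X : eqType) := Equality.copy (msg X) (can_type (@sum_of_msgK X)).

Section Protocols.
Variable X : eqType.
Implicit Types (P : protocol X) (A B S U : seq (example X)) (t : seq (msg X)).

Definition next_msg P A B t : option (msg X) :=
  match turn P t with
  | None => None
  | Some true => Some (speak_a P A t)
  | Some false => Some (speak_b P B t)
  end.

Definition msg_at P A B k := next_msg P A B (run P A B k).

Lemma runS P A B k :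
  run P A B k.+1 =
  if msg_at P A B k is Some x then rcons (run P A B k) x else run P A B k.
Proof. by rewrite /msg_at /next_msg /=; case: turn => [[]|]. Qed.

Lemma run_cross P A1 B1 A2 B2 (C : Type) (code : option (msg X) -> C)
    (ok : pred (option (msg X))) n :
  {in ok &, injective code} ->
  (forall k, k < n -> ok (msg_at P A1 B2 k) /\ ok (msg_at P A2 B1 k)) ->
  (forall k, k < n -> code (msg_at P A1 B1 k) = code (msg_at P A2 B2 k)) ->
  run P A1 B2 n = run P A2 B1 n.
Proof.
move=> code_inj ok_cross code_diag.
suff /(_ n (leqnn n)) [-> -> _] : forall k, k <= n ->
  [/\ run P A1 B2 k = run P A1 B1 k, run P A2 B1 k = run P A1 B1 k
    & run P A2 B2 k = run P A1 B1 k] by [].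
elim=> [|k IH] lt_kn //.
have [e12 e21 e22] := IH (ltnW lt_kn).
have [ok12 ok21] := ok_cross k lt_kn; have code_k := code_diag k lt_kn.
rewrite /msg_at e12 e21 e22 in ok12 ok21 code_k.
rewrite !runS /msg_at e12 e21 e22.
set t := run P A1 B1 k in ok12 ok21 code_k *.
suff [-> -> ->] : [/\ next_msg P A1 B2 t = next_msg P A1 B1 t,
  next_msg P A2 B1 t = next_msg P A1 B1 t & next_msg P A2 B2 t = next_msg P A1 B1 t] by [].
move: ok12 ok21 code_k; rewrite /next_msg; case: turn => [[]|] // ok12 ok21 code_k.
- by have [->] := code_inj _ _ ok12 ok21 code_k.
- by have [->] := code_inj _ _ ok21 ok12 code_k.
Qed.

Definition legal_msgs U : seq (option (msg X)) :=
  [:: None, Some (MBit X false), Some (MBit X true) & [seq Some (MEx z) | z <- U]].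

Lemma runs_within_legal P T A B U :
  runs_within P T A B -> {subset A <= U} -> {subset B <= U} ->
  forall k, k < T -> msg_at P A B k \in legal_msgs U.
Proof.
move=> [_ legal] sAU sBU k /legal; rewrite /msg_at /next_msg.
have ex_inj : injective (fun z : example X => Some (MEx z)) by move=> ? ? [].
case: turn => [[]|] //; [case: speak_a => [z /sAU|[]] | case: speak_b => [z /sBU|[]]];
  by rewrite //= !inE (mem_map ex_inj) ?orbT.
Qed.

Lemma fooling_set_card (I : finType) (A B : I -> seq (example X)) U P T :
  (forall i, {subset A i <= U}) -> (forall i, {subset B i <= U}) ->
  (forall i j, i != j -> runs_within P T (A i) (B j)) ->
  (forall i j, i != j -> run P (A i) (B j) T != run P (A j) (B i) T) ->
  #|I| <= (size U).+3 ^ T.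
Proof.
move=> sAU sBU legal distinct.
have size_legal : size (legal_msgs U) = (size U).+3 by rewrite /= size_map.
(* an illegal message, possible on the inputs (A i, B i), gets the junk code [ord0] *)
pose code o : 'I_(size U).+3 := inord (index o (legal_msgs U)).
have code_inj : {in legal_msgs U &, injective code}.
  move=> o1 o2 o1U o2U /(congr1 val).
  rewrite /= !inordK -?size_legal ?index_mem //.
  by move/(congr1 (nth None (legal_msgs U))); rewrite !nth_index.
pose F i := [ffun k : 'I_T => code (msg_at P (A i) (B i) k)].
suff F_inj : injective F by have := leq_card F F_inj; rewrite card_ffun !card_ord.
move=> i j eqF; case: (eqVneq i j) => // neq_ij.
case/negP: (distinct _ _ neq_ij); apply/eqP.
apply: (run_cross code_inj) => k lt_kT.
  by split; apply: runs_within_legal (legal _ _ _) _ _ _ _ => //; rewrite eq_sym.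
by move/ffunP/(_ (Ordinal lt_kT)): eqF; rewrite !ffunE.
Qed.

Definition consistent (h : X -> bool) S := forall z, z \in S -> h z.1 = z.2.

Lemma emp_loss_consistent h S : consistent h S -> emp_loss S h = 0%R.
Proof.
move=> hS; rewrite /emp_loss (@eq_in_count _ _ pred0) ?count_pred0 /Rdiv ?Rmult_0_l //.
by move=> z /hS /= ->; rewrite eqxx.
Qed.

Lemma consistent_of_small_loss h S eps :
  (INR (size S) * eps < 1)%R -> (emp_loss S h <= eps)%R -> consistent h S.
Proof.
rewrite /emp_loss; set c := count _ S => small loss.
suff /eqP : c = 0 by rewrite -leqn0 leqNgt -has_count => /hasPn h_ok z /h_ok /negPn /eqP.
case: (posnP c) => // c_gt0.
have s_gt0 : (0 < INR (size S))%R by apply/lt_0_INR/ltP/(leq_trans c_gt0 (count_size _ _)).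
have c_ge1 : (1 <= INR c)%R by apply: (le_INR 1); apply/leP.
have : (INR c <= eps * INR (size S))%R.
  rewrite (_ : INR c = INR c / INR (size S) * INR (size S))%R; last by field; lra.
  by apply: Rmult_le_compat_r; lra.
lra.
Qed.

Lemma proper_learner_consistent H eps P T Sa Sb :
  proper_learner_realizable H eps P T -> realizable H (Sa ++ Sb) ->
  (INR (size (Sa ++ Sb)) * eps < 1)%R ->
  let h := output P (run P Sa Sb T) in H h /\ consistent h (Sa ++ Sb).
Proof.
move=> learner real small; have [_ [Hh acc]] := learner _ _ real; split=> //.
have [f [Hf f0]] := real.
by apply: consistent_of_small_loss small _; have := acc f Hf; rewrite f0 Rplus_0_l.
Qed.

End Protocols.

Notation point := (nat * nat)%type.

Definition two_point (n t : nat) (x : point) : bool :=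
  (x.1 == n) && ((x.2 == 0) || (x.2 == t)).

Definition two_points : hclass point :=
  fun h => exists n t, 0 < t <= n /\ h = two_point n t.

Lemma two_points_VC_dim : VC_dim two_points 1.
Proof.
split.
  exists [:: ((1, 0) : point)]; split=> //; split=> // f.
  exists (two_point (if f (1, 0) then 1 else 2) 1); split.
    by exists (if f (1, 0) then 1 else 2), 1; case: (f _).
  by move=> x; rewrite inE => /eqP ->; case: (f _).
case=> [|a [|b s]] //= uniq_ab shattered; exfalso.
have neq_ab : a != b by move: uniq_ab; rewrite inE negb_or => /andP[/andP[]].
have [_ [[n [t [/andP[t_gt0 _] ->]]] all_pos]] := shattered (fun _ => true).
have [_ [[n' [t' [_ ->]]] sep]] := shattered (fun x : point => x.2 != 0).
(* the first labelling forces {a, b} = {(n, 0), (n, t)}, which the second one separates *)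
move: (all_pos a) (all_pos b) (sep a) (sep b) neq_ab; rewrite !inE !eqxx ?orbT.
clear uniq_ab shattered all_pos sep.
case: a b => [a1 a2] [b1 b2]; rewrite /two_point xpair_eqE /=.
by move=> /(_ isT) pos_a /(_ isT) pos_b /(_ isT) sep_a /(_ isT) sep_b; lia.
Qed.

Definition child (i : nat) (c : bool) : nat := (2 * i + c).+1.

Lemma eq_child i j c d : (child i c == child j d) = (i == j) && (c == d).
Proof. by case: c; case: d; rewrite /child; lia. Qed.

Lemma two_point_child n i j c d :
  two_point n (child i c) (n, child j d) = (j == i) && (d == c).
Proof. by rewrite /two_point /= eqxx eq_child. Qed.

Lemma child_surj m k : 0 < k <= 2 * m -> exists (i : 'I_m) c, k = child i c.
Proof.
move=> k_bnd; have k_eq := odd_double_half k.-1.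
have lt_im : k.-1./2 < m by rewrite -ltn_double; move: k_eq; case: odd => /=; lia.
exists (Ordinal lt_im), (odd k.-1); rewrite /child /=; move: k_eq; case: odd => /=; lia.
Qed.

Section Block.
Variable m : nat.
Implicit Type b : {ffun 'I_m -> bool}.

Definition block : seq (example point) :=
  ((2 * m, 0), true) :: [seq ((2 * m, k), false) | k <- iota 1 (2 * m)].

Definition alice_sample b : seq (example point) :=
  ((2 * m, 0), true) :: [seq ((2 * m, child i (~~ b i)), false) | i : 'I_m <- enum 'I_m].

Definition bob_sample b : seq (example point) :=
  [seq ((2 * m, child i (b i)), false) | i : 'I_m <- enum 'I_m].

Lemma size_block : size block = (2 * m).+1.
Proof. by rewrite /= size_map size_iota. Qed.

Lemma size_samples b b' : size (alice_sample b ++ bob_sample b') = (2 * m).+1.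
Proof. by rewrite size_cat /= !size_map -enumT size_enum_ord; lia. Qed.

Lemma negative_in_block k : 0 < k <= 2 * m -> ((2 * m, k), false) \in block.
Proof.
by move=> k_bnd; rewrite inE; apply/orP; right; apply: map_f; rewrite mem_iota; lia.
Qed.

Lemma child_in_block (i : 'I_m) c : ((2 * m, child i c), false) \in block.
Proof. by apply: negative_in_block; have := ltn_ord i; rewrite /child; case: c; lia. Qed.

Lemma alice_sub_block b : {subset alice_sample b <= block}.
Proof.
move=> z; rewrite inE => /orP[/eqP -> | /mapP[i _ ->]]; first exact: mem_head.
exact: child_in_block.
Qed.

Lemma bob_sub_block b : {subset bob_sample b <= block}.
Proof. by move=> z /mapP[i _ ->]; apply: child_in_block. Qed.

Lemma block_sub_samples b : {subset block <= alice_sample b ++ bob_sample b}.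
Proof.
move=> z; rewrite inE mem_cat => /orP[/eqP -> | /mapP[k]]; first by rewrite mem_head.
rewrite mem_iota add1n ltnS => /child_surj[i [c ->]] ->.
case: (eqVneq c (b i)) => [-> | /negPf c_neq]; apply/orP; [right | left].
  by apply/mapP; exists i; rewrite ?mem_enum.
rewrite inE (_ : c = ~~ b i); last by move: c_neq; case: c; case: (b i).
by apply/orP; right; apply/mapP; exists i; rewrite ?mem_enum.
Qed.

Lemma block_unrealizable h : two_points h -> ~ consistent h block.
Proof.
move=> [n [t [/andP[t_gt0 t_le] ->]]] h_block.
have := h_block _ (mem_head _ _); rewrite /two_point /= andbT => /eqP n_eq.
have t_in : ((2 * m, t), false) \in block by apply: negative_in_block; rewrite t_gt0 n_eq.
by have := h_block _ t_in; rewrite /two_point /= n_eq !eqxx orbT.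
Qed.

Lemma cross_realizable b1 b2 :
  b1 != b2 -> realizable two_points (alice_sample b1 ++ bob_sample b2).
Proof.
move=> neq_b; have [i neq_i] : exists i, b1 i != b2 i.
  apply/existsP; apply: contraR neq_b => /existsPn same.
  by apply/eqP/ffunP => i; apply/eqP/negPn.
exists (two_point (2 * m) (child i (b1 i))); split.
  exists (2 * m), (child i (b1 i)); split=> //.
  by have := ltn_ord i; rewrite /child; case: (b1 i); lia.
apply: emp_loss_consistent => z; rewrite mem_cat inE -orbA.
case/or3P=> [/eqP -> | /mapP[j _ ->] | /mapP[j _ ->]]; rewrite /= ?two_point_child.
- by rewrite /two_point /= !eqxx.
- by case: (eqVneq (val j) (val i)) => [/val_inj -> | //]; case: (b1 i).
- case: (eqVneq (val j) (val i)) => [/val_inj -> | //].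
  by move: neq_i; case: (b1 i); case: (b2 i).
Qed.

End Block.

Lemma two_points_learner_cost m eps P T :
  (INR (2 * m).+1 * eps < 1)%R -> proper_learner_realizable two_points eps P T ->
  2 ^ m <= (2 * m).+4 ^ T.
Proof.
move=> small learner.
have small_cross (b b' : {ffun 'I_m -> bool}) :
  (INR (size (alice_sample b ++ bob_sample b')) * eps < 1)%R by rewrite size_samples.
have := fooling_set_card (@alice_sub_block m) (@bob_sub_block m) (P := P) (T := T).
rewrite card_ffun card_bool card_ord size_block; apply.
  by move=> b1 b2 /cross_realizable /learner[].
move=> b1 b2 neq_b; apply/eqP => same_run.
have neq_b' : b2 != b1 by rewrite eq_sym.
have [h_in cons12] :=
  proper_learner_consistent learner (cross_realizable neq_b) (small_cross _ _).
have [_ cons21] :=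
  proper_learner_consistent learner (cross_realizable neq_b') (small_cross _ _).
rewrite -same_run in cons21.
apply: (block_unrealizable h_in) => z /(block_sub_samples b1).
rewrite mem_cat => /orP[z_a | z_b].
  by apply: (cons12 z); rewrite mem_cat z_a.
by apply: (cons21 z); rewrite mem_cat z_b orbT.
Qed.

Lemma ln_le x y : (0 < x)%R -> (x <= y)%R -> (ln x <= ln y)%R.
Proof.
move=> x_gt0 [lt_xy | ->]; last exact: Rle_refl.
by apply: Rlt_le; apply: ln_increasing.
Qed.

Lemma INR_expn a n : INR (a ^ n) = (INR a ^ n)%R.
Proof. by elim: n => [|n IH] //; rewrite expnS -multE mult_INR IH. Qed.

Lemma ln_le_of_expn_le a b m T : 0 < a -> 0 < b -> a ^ m <= b ^ T ->
  (INR m * ln (INR a) <= INR T * ln (INR b))%R.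
Proof.
move=> a_gt0 b_gt0 /leP/le_INR; rewrite !INR_expn.
have [a_pos b_pos] : (0 < INR a /\ 0 < INR b)%R by split; apply/lt_0_INR/ltP.
by rewrite -!ln_pow //; apply: ln_le; apply: pow_lt.
Qed.

Lemma choose_scale eps : (0 < eps <= / 12)%R ->
  exists m, [/\ (INR (2 * m).+1 * eps < 1)%R, (/ (8 * eps) <= INR m * ln 2)%R
              & (INR (2 * m).+4 <= 1 / eps)%R].
Proof.
move=> [eps_gt0 eps_le].
pose r := (/ (4 * eps))%R.
have r_eps : (r * eps = / 4)%R by rewrite /r; field; lra.
have r_ge3 : (3 <= r)%R by nra.
have [up_gt up_le] := archimed r.
exists (Z.to_nat (up r)).
have m_eq : INR (Z.to_nat (up r)) = IZR (up r).
  by rewrite INR_IZR_INZ Z2Nat.id //; apply: le_IZR; lra.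
rewrite !S_INR -multE mult_INR m_eq /=.
have := ln_lt_2; split; [nra | | rewrite /Rdiv Rmult_1_l].
- rewrite (_ : / (8 * eps) = r / 2)%R; [nra | rewrite /r; field; lra].
- rewrite (_ : / eps = 4 * r)%R; [nra | rewrite /r; field; lra].
Qed.

Theorem theorem2 :
  exists (X : eqType) (H : hclass X),
    VC_dim H 1 /\
    exists (c : R) (k : nat) (eps0 : R),
      (0 < c)%R /\ (0 < eps0)%R /\
      forall eps : R, (0 < eps)%R -> (eps <= eps0)%R ->
      forall (P : protocol X) (T : nat),
        proper_learner_realizable H eps P T ->
        (c / (eps * (1 + ln (1 / eps)) ^ k) <= INR T)%R.
Proof.
exists point, two_points; split; first exact: two_points_VC_dim.
exists (/ 8)%R, 1, (/ 12)%R; split; first lra; split; first lra.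
move=> eps eps_gt0 eps_le P T learner.
have [m [small lower upper]] := choose_scale (conj eps_gt0 eps_le).
have cost := ln_le_of_expn_le (ltn0Sn _) (ltn0Sn _) (two_points_learner_cost small learner).
have ln_upper : (ln (INR (2 * m).+4) <= ln (1 / eps))%R.
  by apply: ln_le upper; apply: lt_0_INR; lia.
have ln_pos : (0 < ln (INR (2 * m).+4))%R.
  by rewrite -ln_1; apply: ln_increasing; rewrite ?S_INR; have := pos_INR (2 * m); lra.
have T_cost : (INR T * ln (INR (2 * m).+4) <= INR T * (1 + ln (1 / eps)))%R.
  by apply: Rmult_le_compat_l; [apply: pos_INR | lra].
apply: (Rmult_le_reg_r (1 + ln (1 / eps))); first lra.
rewrite (_ : / 8 / (eps * (1 + ln (1 / eps)) ^ 1) * (1 + ln (1 / eps)) = / (8 * eps))%R;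
  last by field; lra.
by move: cost; rewrite (_ : INR 2 = 2%R) //; lra.
Qed.
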